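(* Let $p$ be a positive integer and $q$ a positive even integer with $p/q\in[2.5,3)$. Then there exists a fractional clique $x$ of the Kneser graph $K_{p/q}$ of weight $p/q$ such that $x(v)=\binom{p-q}{q}^{-1}$ for every neighbor $v$ of the vertex $[q]=\{1,\dots,q\}$.
   Context: For integers $1\le q\le p$, the Kneser graph $K_{p/q}$ has as vertices all $q$-element subsets of $[p]=\{1,\dots,p\}$, two being adjacent iff they are disjoint. A fractional clique of a graph $G$ is a map $x:V(G)\to[0,1]$ such that $\sum_{v\in I}x(v)\le 1$ for every independent set $I$ of $G$; its weight is $\sum_{v\in V(G)}x(v)$. *)

From HB Require Import structures.
From mathcomp Require Import all_boot all_order all_algebra.
Set Implicit Arguments. Unset Strict Implicit. Unset Printing Implicit Defensive.
Import Order.TTheory GRing.Theory Num.Theory.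

Definition kvert (p q : nat) := {A : {set 'I_p} | #|A| == q}.

Definition kadj (p q : nat) (u v : kvert p q) : bool :=
  (u != v) && [disjoint val u & val v].

Definition kindependent (p q : nat) (I : {set kvert p q}) : bool :=
  [forall u in I, forall v in I, ~~ kadj u v].

Local Open Scope ring_scope.

Definition fractional_clique (R : realFieldType) (p q : nat)
    (x : kvert p q -> R) : Prop :=
  (forall v, 0 <= x v <= 1) /\
  (forall I : {set kvert p q}, kindependent I -> \sum_(v in I) x v <= 1).

Definition weight (R : realFieldType) (p q : nat) (x : kvert p q -> R) : R :=
  \sum_(v : kvert p q) x v.

(* The vertex [q] = {1,...,q}, i.e. {0,...,q-1} in 'I_p. *)
Definition firstq (p q : nat) : {set 'I_p} := [set i : 'I_p | (i < q)%N].

From HB Require Import structures.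
From mathcomp Require Import all_boot all_order all_algebra all_fingroup zify ring.
Import Order.TTheory GRing.Theory Num.Theory.
Set Implicit Arguments. Unset Strict Implicit. Unset Printing Implicit Defensive.

(* Write q = 2h and w = p - q, so that q + h <= w < 2q.  The points q, ..., p - 1
   outside [q] are identified with the cycle Z_w.  For a permutation s of [p]
   fixing [q] pointwise we put weight
     1/w         on each s(X_t), X_t the arc of length q starting at t,
     (w-q)/(qw)  on each s(Y_{b,t}), Y_{b,t} one half of [q] plus the arc of
                 length h starting at t (b = 0, 1),
     (2q-w)/q    on [q] itself.
   The total weight is p/q.  The sets met by an independent set form an
   intersecting pattern of long and short arcs, and an arc-counting argument on
   Z_w (arc_family_bound, which contains Katona's circle lemma) shows that they
   receive weight at most 1.  Averaging over all such s yields a fractional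
   clique invariant under the permutations fixing [q]; these act transitively on
   the neighbours of [q], which receive total weight 1, hence 1/C(p-q, q) each. *)

Lemma mod_cases3 (w x : nat) : 0 < w -> x < 3 * w ->
  x = x %% w \/ x = x %% w + w \/ x = x %% w + 2 * w.
Proof.
move=> w_gt0 x_lt; have := divn_eq x w; have : x %/ w < 3 by rewrite ltn_divLR.
by move: (x %/ w) (x %% w) => k r; case: k => [|[|[|//]]] _ ->; lia.
Qed.

Lemma mod_cases2 (w x : nat) : 0 < w -> x < 2 * w -> x = x %% w \/ x = x %% w + w.
Proof. by move=> w_gt0 x_lt; have := @mod_cases3 w x w_gt0; lia. Qed.

(* Turns a goal about residues modulo w into linear arithmetic: each innermost
   x %% w (with x < 3w derivable by lia) becomes a fresh r < w together with the
   possible values of x, and hypotheses mentioning %% w are reverted first. *)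
Ltac elim_mod w :=
  repeat match goal with
  | |- context [?x %% w] =>
     lazymatch x with context [_ %% w] => fail | _ => idtac end;
     let w_gt0 := fresh "w_gt0" in
     let x_lt := fresh "x_lt" in
     assert (w_gt0 : 0 < w) by lia;
     tryif (assert (x_lt : x < 2 * w) by lia) then
       (pose proof (@mod_cases2 w x w_gt0 x_lt) as Hx;
        pose proof (@ltn_pmod x w w_gt0); clear x_lt w_gt0;
        generalize dependent (x %% w); intros; destruct Hx as [?|?])
     else
       (assert (x_lt : x < 3 * w) by lia;
        pose proof (@mod_cases3 w x w_gt0 x_lt) as Hx;
        pose proof (@ltn_pmod x w w_gt0); clear x_lt w_gt0;
        generalize dependent (x %% w); intros; destruct Hx as [?|[?|?]])
  | Hy : context [_ %% w] |- _ => revert Hy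
  end.

Section CyclicArcs.
Variable w : nat.

Definition cadd (a b : nat) : nat := (a + b) %% w.

Definition arcs_disjoint (m n s t : nat) : Prop :=
  forall j k, j < m -> k < n -> cadd s j <> cadd t k.

Lemma arcs_disjoint_sym m n s t : arcs_disjoint m n s t -> arcs_disjoint n m t s.
Proof. by move=> D k j hk hj /esym; apply: D. Qed.

Lemma cadd_injr t a b : t < w -> a < w -> b < w -> cadd t a = cadd t b -> a = b.
Proof. by move=> ht ha hb; rewrite /cadd; elim_mod w; lia. Qed.

Lemma cadd_injl t t' a : t < w -> t' < w -> a < w -> cadd t a = cadd t' a -> t = t'.
Proof. by move=> ht ht' ha; rewrite /cadd; elim_mod w; lia. Qed.

Lemma arc_after_disjoint m n d t : t < w -> n + d + m <= w ->
  arcs_disjoint m n (cadd t (n + d)) t.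
Proof. by move=> ht hfit j k hj hk; rewrite /cadd; elim_mod w; lia. Qed.

Variable h : nat.
Hypotheses (h_gt0 : 0 < h) (hh_le_w : h + h <= w).

(* The position of t in Z_w counted from u0 - (h - 1): the short arcs (of length h)
   meeting the short arc at u0 are exactly those starting in the window [0, 2h - 2]. *)
Definition window (u0 t : nat) : nat := (t + (w + h - 1 - u0)) %% w.

(* Generalizing the shift w + h - 1 - u0 lets elim_mod see a plain variable. *)
Ltac gen_shift := match goal with |- context [w + h - 1 - ?u] =>
  have : (w + h - 1 - u) + u = w + h - 1 by lia;
  generalize (w + h - 1 - u) => c; intros end.

Lemma window_meet u0 t : u0 < w -> t < w ->
  ~ arcs_disjoint h h t u0 -> window u0 t <= h + h - 2.
Proof.
move=> hu ht meet; case: (leqP (window u0 t) (h + h - 2)) => // far; case: meet.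
by move=> k k' hk hk'; move: far; rewrite /cadd /window; gen_shift; elim_mod w; lia.
Qed.

Definition fold_h (x : nat) : nat := if x < h then x else x - h.

(* Two distinct starts in the window with the same folded position lie exactly h
   apart, so their short arcs are disjoint. *)
Lemma window_fold_inj u0 u u' : u0 < w -> u < w -> u' < w ->
  window u0 u <= h + h - 2 -> window u0 u' <= h + h - 2 ->
  ~ arcs_disjoint h h u u' -> fold_h (window u0 u) = fold_h (window u0 u') -> u = u'.
Proof.
move=> hu0 hu hu' win win' meet; case: (eqVneq u u') => // /eqP neq; rewrite /fold_h.
case: ltnP => lo; case: ltnP => lo' same.
1,4: by move: neq lo lo' win win' same; rewrite /window; gen_shift; elim_mod w; lia.
all: case: meet => k k' hk hk'; move: neq lo lo' win win' same.
all: by rewrite /cadd /window; gen_shift; elim_mod w; lia.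
Qed.

(* Let ts have the largest window position among starts whose short arcs meet
   the one at u0.  Past the gap of length 1 after ts + h, the points
   ts + h + 1 + k (k + 2h <= w) are not of the form t + h for any start t with a
   smaller window position. *)
Lemma window_gap u0 ts t k : u0 < w -> ts < w -> t < w ->
  window u0 ts <= h + h - 2 -> window u0 t <= window u0 ts -> k + h + h <= w ->
  cadd ts (h + 1 + k) <> cadd t h.
Proof.
move=> hu0 hts ht win_ts before hk; move: win_ts before.
by rewrite /cadd /window; gen_shift; elim_mod w; lia.
Qed.
End CyclicArcs.

Lemma disjoint_by (T : finType) (A B : {pred T}) :
  (forall x, x \in A -> x \in B -> False) -> [disjoint A & B].
Proof. by move=> AB; apply/pred0P => x /=; apply/negbTE/andP => -[/AB]. Qed.

Lemma card_disjoint2 (T : finType) (A B : {set T}) :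
  [disjoint A & B] -> #|A| + #|B| <= #|T|.
Proof.
by move=> dAB; move: (leq_card_setU A B).2; rewrite dAB => /eqP <-; apply: max_card.
Qed.

Lemma card_disjoint3 (T : finType) (A B C : {set T}) :
  [disjoint A & B] -> [disjoint A & C] -> [disjoint B & C] ->
  #|A| + #|B| + #|C| <= #|T|.
Proof.
move=> dAB dAC dBC; move: (leq_card_setU A B).2; rewrite dAB => /eqP <-.
apply: card_disjoint2; apply: disjoint_by => x /setUP [] xA xC.
  by rewrite (disjointFr dAC xA) in xC.
by rewrite (disjointFr dBC xA) in xC.
Qed.

Section ArcFamilies.
Variables (w h : nat).
Hypotheses (h_gt0 : 0 < h) (hh_le_w : h + h <= w).

Lemma w_gt0 : 0 < w. Proof. lia. Qed.

Definition rot (a : nat) (t : 'I_w) : 'I_w := Ordinal (ltn_pmod (t + a) w_gt0).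

Lemma rotE a t : rot a t = cadd w t a :> nat. Proof. by []. Qed.

Lemma card_rot a (A : {set 'I_w}) : a < w -> #|rot a @: A| = #|A|.
Proof.
move=> ha; apply: card_imset => t t' /(congr1 (@nat_of_ord w)); rewrite !rotE => same.
by apply: val_inj; apply: cadd_injl same.
Qed.

(* Two families of short arcs with every arc of the first meeting every arc of the
   second: rotating the first family by h makes it disjoint from the second. *)
Lemma cross_meeting_card (T1 T2 : {set 'I_w}) :
  (forall t1 t2, t1 \in T1 -> t2 \in T2 -> ~ arcs_disjoint w h h t1 t2) ->
  #|T1| + #|T2| <= w.
Proof.
move=> meet; have dj : [disjoint rot h @: T1 & T2].
  apply: disjoint_by => x /imsetP [t1 ht1 ->] ht2; apply: (meet _ _ ht1 ht2).
  apply: arcs_disjoint_sym; rewrite rotE -[h in cadd _ _ h]addn0.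
  by apply: arc_after_disjoint => //; lia.
by have := card_disjoint2 dj; rewrite card_ord card_rot //; lia.
Qed.

(* Katona's circle lemma: pairwise meeting short arcs have at most h starts, since
   the window position modulo h is injective on them. *)
Lemma katona_circle (U : {set 'I_w}) :
  (forall u u', u \in U -> u' \in U -> ~ arcs_disjoint w h h u u') -> #|U| <= h.
Proof.
move=> meet; have [->|[u0 hu0]] := set_0Vmem U; first by rewrite cards0.
have win u : u \in U -> window w h u0 u <= h + h - 2.
  by move=> hu; apply: window_meet => //; apply: meet.
have fold_lt u : u \in U -> fold_h h (window w h u0 u) < h.
  by move=> /win; rewrite /fold_h; case: ifP => //; lia.
pose pos (u : 'I_w) : 'I_h := Ordinal (ltn_pmod (fold_h h (window w h u0 u)) h_gt0).
rewrite -(card_in_imset (f := pos)); first by rewrite -[h in _ <= h]card_ord max_card.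
move=> u u' hu hu' /(congr1 val) /=; rewrite !modn_small ?fold_lt // => same.
apply: val_inj.
apply: (window_fold_inj h_gt0 hh_le_w (ltn_ord u0) (ltn_ord u) (ltn_ord u')) => //.
- exact: win.
- exact: win.
- exact: meet.
Qed.

Variable q : nat.
Hypotheses (h_le_q : h <= q) (qh_le_w : q + h <= w).

(* Long arcs (length q) meeting every short arc of a family T avoid the rotated
   family T + h. *)
Lemma long_short_card (S T : {set 'I_w}) :
  (forall s t, s \in S -> t \in T -> ~ arcs_disjoint w q h s t) -> #|S| + #|T| <= w.
Proof.
move=> meet; have dj : [disjoint S & rot h @: T].
  apply: disjoint_by => x hx /imsetP [t ht E]; apply: (meet _ _ hx ht).
  by rewrite E rotE -[h in cadd _ _ h]addn0; apply: arc_after_disjoint => //; lia.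
by have := card_disjoint2 dj; rewrite card_ord card_rot //; lia.
Qed.

(* If moreover all short arcs of T meet the one at u0 \in T, then T + h lies in a
   window, and the w - q - h points following the last shifted arc are also
   avoided by the long arcs. *)
Lemma long_short_card_gap (S T : {set 'I_w}) (u0 : 'I_w) : u0 \in T ->
  (forall t, t \in T -> ~ arcs_disjoint w h h t u0) ->
  (forall s t, s \in S -> t \in T -> ~ arcs_disjoint w q h s t) ->
  #|S| + #|T| + (w - q - h) <= w.
Proof.
move=> hu0 meet0 meet.
have win t : t \in T -> window w h u0 t <= h + h - 2.
  by move=> ht; apply: window_meet => //; apply: meet0.
have [ts hts last_ts] := @arg_maxnP _ u0 (mem T) (window w h u0) hu0.
pose K := [set rot (h + 1 + k) ts | k : 'I_(w - q - h)].
have cardK : #|K| = w - q - h.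
  rewrite card_imset ?card_ord // => k k' /(congr1 (@nat_of_ord w)).
  rewrite !rotE => same; apply: val_inj.
  have fit : h + 1 + k < w by have := ltn_ord k; lia.
  have fit' : h + 1 + k' < w by have := ltn_ord k'; lia.
  exact: addnI (cadd_injr (ltn_ord ts) fit fit' same).
have dSK : [disjoint S & K].
  apply: disjoint_by => x hx /imsetP [k _ E]; rewrite {x}E in hx.
  apply: (meet _ _ hx hts); rewrite rotE -addnA.
  by apply: arc_after_disjoint => //; have := ltn_ord k; lia.
have dTK : [disjoint rot h @: T & K].
  apply: disjoint_by => x /imsetP [t ht ->] /imsetP [k _ /(congr1 (@nat_of_ord w))].
  rewrite !rotE => /esym.
  have := window_gap h_gt0 hh_le_w (ltn_ord u0) (ltn_ord ts) (ltn_ord t).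
  by apply=> //; [apply: win | apply: last_ts | have := ltn_ord k; lia].
have dST : [disjoint S & rot h @: T].
  apply: disjoint_by => x hx /imsetP [t ht E].
  apply: (meet _ _ hx ht); rewrite E rotE -[h in cadd _ _ h]addn0.
  by apply: arc_after_disjoint => //; lia.
have := card_disjoint3 dST dSK dTK.
by rewrite card_ord card_rot ?cardK //; lia.
Qed.
End ArcFamilies.

(* The counting bound behind the independent-set inequality: long arcs (length
   q = 2h) S, two families T1, T2 of short arcs and a flag c, subject to the
   intersection pattern of an independent set (c says that [q] itself is chosen,
   which excludes the long arcs).  Here w - q and q + q - w play the roles of the
   weights e and q - e. *)
Lemma arc_family_bound (w q h : nat) (S T1 T2 : {set 'I_w}) (c : bool) :
  0 < h -> q = h + h -> q + h <= w -> w < q + q ->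
  (forall s t, s \in S -> t \in T1 :|: T2 -> ~ arcs_disjoint w q h s t) ->
  (forall t1 t2, t1 \in T1 -> t2 \in T2 -> ~ arcs_disjoint w h h t1 t2) ->
  (c -> S = set0) ->
  q * #|S| + (w - q) * (#|T1| + #|T2|) + (q + q - w) * w * c <= q * w.
Proof.
move=> h_gt0 q_eq fit short long_short cross no_long.
have hh_le_w : h + h <= w by lia.
have h_le_q : h <= q by lia.
case: c no_long => [/(_ erefl) -> | _].
  by have := cross_meeting_card h_gt0 hh_le_w cross; rewrite cards0; nia.
rewrite muln0 addn0; have split_card := cardsUI T1 T2.
have := long_short_card h_gt0 hh_le_w h_le_q fit long_short.
have [U0 | [u0 hu0]] := set_0Vmem (T1 :&: T2).
  by rewrite U0 cards0 in split_card; nia.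
move: (hu0); rewrite inE => /andP [u0T1 u0T2].
have meet0 t : t \in T1 :|: T2 -> ~ arcs_disjoint w h h t u0.
  case/setUP => ht; first exact: cross.
  by move=> D; apply: (cross _ _ u0T1 ht); apply: arcs_disjoint_sym.
have u0T : u0 \in T1 :|: T2 by rewrite inE u0T1.
have gap := long_short_card_gap h_gt0 hh_le_w h_le_q fit u0T meet0 long_short.
have katona : #|T1 :&: T2| <= h.
  apply: (katona_circle h_gt0 hh_le_w) => u u'; rewrite !inE.
  by case/andP => uT1 _ /andP [_ u'T2]; apply: cross.
have small : #|T1 :&: T2| <= #|T1 :|: T2|.
  by apply: subset_leq_card; apply/subsetP => x; rewrite !inE => /andP [->].
by nia.
Qed.

Section Indicators.
Variable R : pzSemiRingType.
Local Open Scope ring_scope.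

Lemma sum_indicator (T : finType) (c : T) : \sum_(v : T) ((v == c)%:R : R) = 1.
Proof. by rewrite (bigD1 c) //= eqxx big1 ?addr0 // => v /negbTE ->. Qed.

Lemma sum_indicator_in (T : finType) (I : {pred T}) (c : T) :
  \sum_(v in I) ((v == c)%:R : R) = (c \in I)%:R.
Proof.
case: (boolP (c \in I)) => cI.
  by rewrite (bigD1 c) //= eqxx big1 ?addr0 // => v /andP [_ /negbTE ->].
by rewrite big1 // => v vI; case: eqP => // vc; rewrite -vc vI in cI.
Qed.

Lemma sum_indicator_card (I J : finType) (A : {pred J}) (f : I -> J) :
  \sum_(v in A) \sum_(t : I) ((v == f t)%:R : R) = #|[set t | f t \in A]|%:R.
Proof.
rewrite exchange_big /= (eq_bigr (fun t => (f t \in A)%:R)) => [|t _].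
  2: exact: sum_indicator_in.
rewrite -sum1_card natr_sum [RHS]big_mkcond /=; apply: eq_bigr => t _.
by rewrite inE; case: (f t \in A).
Qed.
End Indicators.

Section KneserFamilies.
Variables (n q h : nat).
Hypotheses (q_eq : q = h + h) (h_gt0 : 0 < h)
  (lower : 5 * q <= 2 * n.+1) (upper : n.+1 < 3 * q).
Local Notation p := n.+1.

(* The points q, ..., p - 1 outside [q] form the cycle Z_w. *)
Definition w : nat := p - q.

Lemma w_fit : q + h <= w. Proof. rewrite /w; lia. Qed.
Lemma w_small : w < q + q. Proof. rewrite /w; lia. Qed.

Definition pt (x : nat) : 'I_p := inord (q + x).

Lemma pt_val x : x < w -> pt x = q + x :> nat.
Proof. by move=> hx; rewrite /pt inordK //; move: hx; rewrite /w; lia. Qed.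

Lemma pt_inj x y : x < w -> y < w -> pt x = pt y -> x = y.
Proof. by move=> hx hy /(congr1 (@nat_of_ord _)); rewrite !pt_val // => /addnI. Qed.

Definition arc (t m : nat) : {set 'I_p} := [set pt (cadd w t j) | j : 'I_m].

Definition qhalf (b : bool) : {set 'I_p} := [set inord (b * h + k) | k : 'I_h].

Definition long (t : nat) : {set 'I_p} := arc t q.
Definition short (b : bool) (t : nat) : {set 'I_p} := qhalf b :|: arc t h.

Lemma cadd_lt t j : cadd w t j < w.
Proof. by apply: ltn_pmod; rewrite /w; lia. Qed.

Lemma card_arc t m : t < w -> m <= w -> #|arc t m| = m.
Proof.
move=> ht hm; rewrite card_imset ?card_ord // => j j' /pt_inj same; apply: val_inj.
by apply: (cadd_injr ht) (same (cadd_lt _ _) (cadd_lt _ _)); apply: leq_trans hm.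
Qed.

Lemma arc_ge t m x : x \in arc t m -> q <= x.
Proof. by case/imsetP => j _ ->; rewrite pt_val ?cadd_lt // leq_addr. Qed.

Lemma qhalf_val (b : bool) (k : 'I_h) : (inord (b * h + k) : 'I_p) = b * h + k :> nat.
Proof. by rewrite inordK //; have := ltn_ord k; case: b => /=; lia. Qed.

Lemma qhalf_lt b x : x \in qhalf b -> x < q.
Proof.
by case/imsetP => k _ ->; rewrite qhalf_val; have := ltn_ord k; case: b => /=; lia.
Qed.

Lemma card_qhalf b : #|qhalf b| = h.
Proof.
rewrite card_imset ?card_ord // => k k' /(congr1 (@nat_of_ord _)).
by rewrite !qhalf_val => /addnI /val_inj.
Qed.

Lemma card_long (t : 'I_w) : #|long t| = q.
Proof. by apply: card_arc => //; have := w_fit; lia. Qed.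

Lemma card_short b (t : 'I_w) : #|short b t| = q.
Proof.
rewrite cardsU card_qhalf card_arc //; last by have := w_fit; lia.
rewrite (_ : _ :&: _ = set0) ?cards0; first lia.
by apply/disjoint_setI0/disjoint_by => x /qhalf_lt lt /arc_ge; lia.
Qed.

Lemma arc_disjoint m n' s t :
  arcs_disjoint w m n' s t -> [disjoint arc s m & arc t n'].
Proof.
move=> D; apply: disjoint_by => x /imsetP [j _ ->] /imsetP [k _ /pt_inj same].
exact: (D j k (ltn_ord j) (ltn_ord k) (same (cadd_lt _ _) (cadd_lt _ _))).
Qed.

Lemma long_short_disjoint b s t :
  arcs_disjoint w q h s t -> [disjoint long s & short b t].
Proof.
move=> D; apply: disjoint_by => x xs /setUP [/qhalf_lt | xt].
  by have := arc_ge xs; lia.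
by rewrite (disjointFr (arc_disjoint D) xs) in xt.
Qed.

Lemma short_short_disjoint t1 t2 :
  arcs_disjoint w h h t1 t2 -> [disjoint short false t1 & short true t2].
Proof.
move=> D; apply: disjoint_by => x /setUP [x1 | x1] /setUP [x2 | x2].
- case/imsetP: x1 => k _ E; case/imsetP: x2 => k' _ /(congr1 (@nat_of_ord _)).
  by rewrite E !qhalf_val /=; have := ltn_ord k; lia.
- by have := qhalf_lt x1; have := arc_ge x2; lia.
- by have := qhalf_lt x2; have := arc_ge x1; lia.
- by rewrite (disjointFr (arc_disjoint D) x1) in x2.
Qed.

Lemma long_firstq t : [disjoint long t & firstq p q].
Proof. by apply: disjoint_by => x /arc_ge hx; rewrite inE ltnNge hx. Qed.

Lemma qhalf_firstq b : exists2 x, x \in qhalf b & x \in firstq p q.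
Proof.
exists (inord (b * h + 0)); first by apply/imsetP; exists (Ordinal h_gt0).
by rewrite inE (qhalf_val b (Ordinal h_gt0)); case: b => /=; lia.
Qed.

Lemma card_firstq : #|firstq p q| = q.
Proof.
have q_le_p : q <= p by lia.
have widen_inj : injective (widen_ord q_le_p) by move=> x y /(congr1 val) /= /val_inj.
rewrite -[RHS]card_ord -(card_imset _ widen_inj); apply: eq_card => x.
rewrite inE; apply/idP/imsetP => [hx | [k _ ->]] /=; last exact: ltn_ord.
by exists (Ordinal hx) => //; apply: val_inj.
Qed.

Definition v0 : kvert p q := exist _ (firstq p q) (introT eqP card_firstq).
Definition mk (A : {set 'I_p}) : kvert p q := insubd v0 A.

Lemma mkK (A : {set 'I_p}) : #|A| = q -> val (mk A) = A.
Proof. by move=> hA; rewrite /mk insubdK //; apply/eqP. Qed.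

Lemma card_vertex (v : kvert p q) : #|val v| = q.
Proof. exact/eqP/(valP v). Qed.

(* Since q > 0, disjoint vertices are distinct, hence adjacent. *)
Lemma disjoint_adj (u v : kvert p q) : [disjoint val u & val v] -> kadj u v.
Proof.
move=> d; rewrite /kadj d andbT; apply/eqP => uv; move: d; rewrite uv.
move/disjoint_setI0; rewrite setIid => v_eq0.
by move: (card_vertex v); rewrite v_eq0 cards0; lia.
Qed.

Lemma indep_disjoint (I : {set kvert p q}) u v : kindependent I ->
  u \in I -> v \in I -> ~ [disjoint val u & val v].
Proof.
move=> /forallP indep hu hv /disjoint_adj.
by move: (indep u); rewrite hu => /forallP /(_ v); rewrite hv => /negP.
Qed.

Definition G : {group {perm 'I_p}} := 'C(firstq p q | 'P)%G.

Lemma G_fix (s : {perm 'I_p}) (x : 'I_p) : s \in G -> x \in firstq p q -> s x = x.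
Proof. by move=> /astabP fix_s /fix_s. Qed.

Lemma G_firstq (s : {perm 'I_p}) : s \in G -> s @: firstq p q = firstq p q.
Proof.
move=> hs; rewrite -[RHS]imset_id; apply: eq_in_imset => x; exact: G_fix.
Qed.

Lemma G_long (s : {perm 'I_p}) (t : nat) :
  s \in G -> [disjoint s @: long t & firstq p q].
Proof.
by move=> hs; rewrite -(G_firstq hs) imset_disjoint ?long_firstq //; apply: perm_inj.
Qed.

Lemma G_short (s : {perm 'I_p}) (b : bool) (t : nat) :
  s \in G -> ~~ [disjoint s @: short b t & firstq p q].
Proof.
move=> hs; have [x xb xq] := qhalf_firstq b; apply/negP => dj.
have sx : s x \in s @: short b t by apply: imset_f; rewrite inE xb.
by move: (disjointFr dj sx); rewrite (G_fix hs xq) xq.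
Qed.

Lemma card_perm_imset (s : {perm 'I_p}) (A : {set 'I_p}) : #|s @: A| = #|A|.
Proof. exact/card_imset/perm_inj. Qed.

Lemma mk_long (s : {perm 'I_p}) (t : 'I_w) : val (mk (s @: long t)) = s @: long t.
Proof. by rewrite mkK // card_perm_imset card_long. Qed.

Lemma mk_short (s : {perm 'I_p}) (b : bool) (t : 'I_w) :
  val (mk (s @: short b t)) = s @: short b t.
Proof. by rewrite mkK // card_perm_imset card_short. Qed.

Variable R : realFieldType.
Local Open Scope ring_scope.

Definition alpha : R := w%:R^-1.
Definition beta : R := (w - q)%:R / (q%:R * w%:R).
Definition gamma : R := (q + q - w)%:R / q%:R.

Definition weighting (s : {perm 'I_p}) (v : kvert p q) : R :=
  alpha * \sum_(t : 'I_w) (v == mk (s @: long t))%:R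
  + beta * \sum_(b : bool) \sum_(t : 'I_w) (v == mk (s @: short b t))%:R
  + gamma * (v == v0)%:R.

Lemma q_neq0 : (q%:R : R) != 0. Proof. by rewrite pnatr_eq0; lia. Qed.
Lemma w_neq0 : (w%:R : R) != 0. Proof. by rewrite pnatr_eq0 /w; lia. Qed.

Lemma weightsE : [/\ (w - q)%:R = w%:R - q%:R :> R,
  (q + q - w)%:R = q%:R + q%:R - w%:R :> R & p%:R = q%:R + w%:R :> R].
Proof.
have := w_fit; have := w_small => small fit; split.
- by rewrite natrB //; lia.
- by rewrite natrB ?natrD //; lia.
- by rewrite -natrD /w; congr _%:R; lia.
Qed.

Lemma sum_weighting s : \sum_v weighting s v = p%:R / q%:R.
Proof.
have count_arcs (f : 'I_w -> kvert p q) :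
    \sum_v \sum_(t : 'I_w) ((v == f t)%:R : R) = w%:R.
  rewrite exchange_big (eq_bigr (fun _ => 1)) => [|t _]; last exact: sum_indicator.
  by rewrite sumr_const card_ord.
rewrite !big_split /= -!mulr_sumr count_arcs exchange_big big_bool /=.
rewrite !count_arcs sum_indicator.
have [eE qeE pE] := weightsE; rewrite /alpha /beta /gamma eE qeE pE.
by field; rewrite q_neq0 w_neq0.
Qed.

Lemma weighting_ge0 s v : 0 <= weighting s v.
Proof.
rewrite /weighting /alpha /beta /gamma; do !apply: addr_ge0; apply: mulr_ge0.
all: rewrite ?divr_ge0 ?invr_ge0 ?mulr_ge0 ?ler0n //.
all: by do ?[apply: sumr_ge0 => ? _]; exact: (ler0n R).
Qed.

Definition long_hits s (I : {set kvert p q}) : {set 'I_w} :=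
  [set t : 'I_w | mk (s @: long t) \in I].
Definition short_hits s (I : {set kvert p q}) (b : bool) : {set 'I_w} :=
  [set t : 'I_w | mk (s @: short b t) \in I].

Lemma sum_weighting_in s (I : {set kvert p q}) :
  \sum_(v in I) weighting s v = alpha * #|long_hits s I|%:R
    + beta * (#|short_hits s I false|%:R + #|short_hits s I true|%:R)
    + gamma * (v0 \in I)%:R.
Proof.
rewrite !big_split /= -!mulr_sumr sum_indicator_card exchange_big big_bool /=.
by rewrite !sum_indicator_card sum_indicator_in [_ + #|short_hits _ _ false|%:R]addrC.
Qed.

Lemma independent_hits_bound s (I : {set kvert p q}) : s \in G -> kindependent I ->
  (q * #|long_hits s I| + (w - q) * (#|short_hits s I false| + #|short_hits s I true|)
   + (q + q - w) * w * (v0 \in I) <= q * w)%N.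
Proof.
move=> hs indep; apply: (arc_family_bound h_gt0 q_eq w_fit w_small).
- move=> t u; rewrite !inE => ht hu D.
  have [b hb] : exists b, mk (s @: short b u) \in I.
    by case/orP: hu; [exists false | exists true].
  apply: (indep_disjoint indep ht hb); rewrite mk_long mk_short imset_disjoint.
    exact: long_short_disjoint.
  exact: perm_inj.
- move=> t u; rewrite !inE => ht hu D; apply: (indep_disjoint indep ht hu).
  by rewrite !mk_short imset_disjoint; [exact: short_short_disjoint | exact: perm_inj].
- move=> v0I; apply/setP => t; rewrite !inE; apply/negP => ht.
  by apply: (indep_disjoint indep ht v0I); rewrite mk_long; apply: G_long.
Qed.

(* Scaling the counting bound by 1/(qw) gives the weights of an independent set. *)
Lemma weighting_indep s (I : {set kvert p q}) : s \in G -> kindependent I ->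
  \sum_(v in I) weighting s v <= 1.
Proof.
move=> hs indep; have := independent_hits_bound hs indep.
set N := (_ + _ + _)%N => bound.
have -> : \sum_(v in I) weighting s v = N%:R / (q%:R * w%:R).
  have [eE qeE _] := weightsE.
  rewrite sum_weighting_in /N /alpha /beta /gamma !(natrD, natrM) eE qeE.
  by field; rewrite q_neq0 w_neq0.
have qw_gt0 : (0 : R) < q%:R * w%:R by rewrite -natrM ltr0n muln_gt0 /w; lia.
by rewrite ler_pdivrMr // mul1r -natrM ler_nat.
Qed.

Definition nbhd : {set kvert p q} :=
  [set v : kvert p q | [disjoint val v & firstq p q]].

(* Among the sets weighted by weighting s, the neighbours of [q] are exactly the
   w sets s(X_t), of weight 1/w each. *)
Lemma weighting_nbhd s : s \in G -> \sum_(v in nbhd) weighting s v = 1.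
Proof.
move=> hs; rewrite sum_weighting_in.
have -> : long_hits s nbhd = setT.
  by apply/setP => t; rewrite !inE mk_long G_long.
have short_far b : short_hits s nbhd b = set0.
  by apply/setP => t; rewrite !inE mk_short; apply/negbTE/G_short.
have v0_far : v0 \in nbhd = false.
  by rewrite inE /= -setI_eq0 setIid; apply/negbTE; rewrite -card_gt0 card_firstq; lia.
rewrite !short_far v0_far !cards0 cardsT card_ord /alpha mulVf ?w_neq0 //.
by rewrite addr0 !mulr0 !addr0.
Qed.

Definition vact (s : {perm 'I_p}) (v : kvert p q) : kvert p q := mk (s @: val v).

Lemma vact_mk (s : {perm 'I_p}) v (A : {set 'I_p}) : #|A| = q ->
  (vact s v == mk (s @: A)) = (v == mk A).
Proof.
move=> hA; rewrite -val_eqE -[RHS]val_eqE /vact !mkK ?card_perm_imset ?card_vertex //.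
by rewrite (inj_eq (imset_inj (@perm_inj _ s))).
Qed.

Lemma imsetM (s t : {perm 'I_p}) (A : {set 'I_p}) : (s * t)%g @: A = t @: (s @: A).
Proof. by rewrite -imset_comp; apply: eq_imset => x; rewrite permM. Qed.

Lemma weighting_act s t v : t \in G -> weighting (s * t)%g (vact t v) = weighting s v.
Proof.
move=> ht; rewrite /weighting.
have -> : (vact t v == v0) = (v == v0).
  have v0E : v0 = mk (firstq p q) by rewrite /mk -[firstq p q]/(val v0) valKd.
  by rewrite v0E -{1}(G_firstq ht) vact_mk // card_firstq.
congr (_ * _ + _ * _ + _).
  by apply: eq_bigr => u _; rewrite imsetM vact_mk // card_perm_imset card_long.
apply: eq_bigr => b _; apply: eq_bigr => u _.
by rewrite imsetM vact_mk // card_perm_imset card_short.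
Qed.

Definition avg_weighting (v : kvert p q) : R :=
  #|G|%:R^-1 * \sum_(s in G) weighting s v.

Lemma G_card_gt0 : (0 : R) < #|G|%:R.
Proof. by rewrite ltr0n; apply/card_gt0P; exists 1%g; apply: group1. Qed.

Lemma avg_vact t v : t \in G -> avg_weighting (vact t v) = avg_weighting v.
Proof.
move=> ht; rewrite /avg_weighting (reindex_inj (mulIg t)) /=; congr (_ * _).
rewrite (eq_bigl (fun s => s \in G)) => [|s]; last by rewrite /= groupMr.
by apply: eq_bigr => s _; rewrite weighting_act.
Qed.

Lemma avg_ge0 v : 0 <= avg_weighting v.
Proof.
rewrite /avg_weighting mulr_ge0 ?invr_ge0 ?ler0n // sumr_ge0 // => s _.
exact: weighting_ge0.
Qed.

Lemma avg_indep (I : {set kvert p q}) :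
  kindependent I -> \sum_(v in I) avg_weighting v <= 1.
Proof.
move=> indep; rewrite /avg_weighting -mulr_sumr exchange_big /= mulrC.
rewrite ler_pdivrMr ?G_card_gt0 // mul1r -[#|G|%:R]mulr1n -sumr_const.
by apply: ler_sum => s hs; apply: weighting_indep.
Qed.

Lemma avg_le1 v : avg_weighting v <= 1.
Proof.
have := @avg_indep [set v]; rewrite big_set1; apply; apply/forallP => u.
apply/implyP; rewrite inE => /eqP ->; apply/forallP => u'.
by apply/implyP; rewrite inE => /eqP ->; rewrite /kadj eqxx.
Qed.

Lemma avg_sum : \sum_v avg_weighting v = p%:R / q%:R.
Proof.
rewrite /avg_weighting -mulr_sumr exchange_big /=.
rewrite (eq_bigr (fun _ => p%:R / q%:R)) => [|s _].
  2: exact: sum_weighting.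
by rewrite sumr_const -[X in _ * X]mulr_natl mulKf // gt_eqF // G_card_gt0.
Qed.

Lemma tperm_G (a b : 'I_p) : a \notin firstq p q -> b \notin firstq p q ->
  tperm a b \in G.
Proof.
move=> na nb; apply/astabP => x xq; change (tperm a b x = x); rewrite tpermD //.
  by apply: contraNneq na => ->.
by apply: contraNneq nb => ->.
Qed.

Lemma tperm_diff (A B : {set 'I_p}) (a b : 'I_p) : a \in A :\: B -> b \in B :\: A ->
  tperm a b @: A :\: B = (A :\: B) :\ a.
Proof.
rewrite !inE => /andP [aB aA] /andP [bA bB]; apply/setP => x; rewrite !inE.
have -> : (x \in tperm a b @: A) = (tperm a b x \in A).
  by rewrite -{1}[x](tpermK a b) mem_imset //; apply: perm_inj.
case: (eqVneq x a) => [-> | xa]; first by rewrite tpermL (negbTE bA) andbF.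
case: (eqVneq x b) => [-> | xb]; first by rewrite bB.
by rewrite tpermD // eq_sym.
Qed.

(* G acts transitively on the q-sets disjoint from [q]: swap the points of
   A :\: B into B one at a time. *)
Lemma G_transitive (A B : {set 'I_p}) : #|A| = #|B| ->
  [disjoint A & firstq p q] -> [disjoint B & firstq p q] ->
  exists2 t, t \in G & t @: A = B.
Proof.
move=> AB dA dB; have [k] := ubnP #|A :\: B|; elim: k A AB dA => // k IH A AB dA lt_k.
have [A_sub | [a aAB]] := set_0Vmem (A :\: B).
  exists 1%g; first exact: group1.
  have -> : A = B by apply/eqP; rewrite eqEcard AB leqnn andbT -setD_eq0 A_sub.
  by rewrite -[RHS]imset_id; apply: eq_imset => x; rewrite perm1.
have /card_gt0P [b bBA] : (0 < #|B :\: A|)%N.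
  by rewrite cardsD setIC -AB -cardsD card_gt0; apply/set0Pn; exists a.
have aq : a \notin firstq p q.
  by move: aAB; rewrite inE => /andP [_ /(disjointFr dA)] ->.
have bq : b \notin firstq p q.
  by move: bBA; rewrite inE => /andP [_ /(disjointFr dB)] ->.
have tG := tperm_G aq bq.
have [t' t'G <-] : exists2 t, t \in G & t @: (tperm a b @: A) = B.
  apply: IH; first by rewrite card_perm_imset.
    by rewrite -(G_firstq tG) imset_disjoint //; apply: perm_inj.
  by rewrite (tperm_diff aAB bBA) (cardsD1 a) aAB in lt_k *.
by exists (tperm a b * t')%g; [rewrite groupM | rewrite imsetM].
Qed.

Lemma card_nbhd : #|nbhd| = 'C(p - q, q).
Proof.
rewrite -(card_imset _ val_inj).
have -> : val @: nbhd = [set A : {set 'I_p} | A \subset ~: firstq p q & #|A| == q].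
  apply/setP => A; rewrite inE; apply/imsetP/andP => [[v hv ->] | [hA /eqP cA]].
    by rewrite -disjoints_subset; move: hv; rewrite inE => ->; rewrite (valP v).
  by exists (mk A); rewrite ?mkK // inE mkK // disjoints_subset.
have := cardsC (firstq p q); rewrite cards_draws card_firstq card_ord => ?.
by congr 'C(_, _); lia.
Qed.

(* By transitivity avg_weighting is constant on the neighbours of [q], which
   together carry weight 1. *)
Lemma avg_nbhd v : v \in nbhd -> avg_weighting v = 'C(p - q, q)%:R^-1.
Proof.
move=> hv; have const u : u \in nbhd -> avg_weighting u = avg_weighting v.
  move=> hu; have [t tG tv] : exists2 t, t \in G & t @: val v = val u.
    by apply: G_transitive; rewrite ?card_vertex //; [move: hv | move: hu]; rewrite inE.
  by rewrite -(avg_vact v tG) /vact tv /mk valKd.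
have total : \sum_(u in nbhd) avg_weighting u = 1.
  rewrite /avg_weighting -mulr_sumr exchange_big (eq_bigr (fun _ => 1)) => [|s hs].
    2: exact: weighting_nbhd.
  by rewrite sumr_const mulVf // gt_eqF // G_card_gt0.
rewrite (eq_bigr _ const) sumr_const card_nbhd -mulr_natr in total.
have C_neq0 : ('C(p - q, q)%:R : R) != 0 by rewrite pnatr_eq0 -lt0n bin_gt0; lia.
by apply: (mulIf C_neq0); rewrite mulVf.
Qed.
End KneserFamilies.

Local Open Scope ring_scope.

Theorem mainTheorem13 (R : realFieldType) (p q : nat) :
  (0 < p)%N -> (0 < q)%N -> ~~ odd q ->
  (5 * q <= 2 * p)%N -> (p < 3 * q)%N ->
  exists x : kvert p q -> R,
    [/\ fractional_clique x,
        weight x = p%:R / q%:R &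
        forall v : kvert p q, [disjoint val v & firstq p q] ->
          x v = ('C(p - q, q))%:R^-1].
Proof.
case: p => [//|n] _ q_gt0 q_even lower upper.
have q_eq : q = (q./2 + q./2)%N.
  by rewrite addnn; move: (odd_double_half q); rewrite (negbTE q_even) add0n.
have h_gt0 : (0 < q./2)%N by lia.
exists (avg_weighting q_eq h_gt0 lower upper R); split.
- split; last exact: avg_indep.
  by move=> v; rewrite avg_ge0 avg_le1.
- exact: avg_sum.
- by move=> v hv; apply: avg_nbhd; rewrite inE.
Qed.
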